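(* Let $m$ be a positive integer, $\gamma=(f,g,h)\in C^m(\mathbb{R},\mathbb{R}^3)$ and $K\subseteq\mathbb{R}$ compact. Suppose $\alpha$ is a modulus of continuity such that, for all $x,y$ in an interval containing $K$ and for $\phi\in\{f,g\}$, $$|\phi^{(m)}(x)-\phi^{(m)}(y)|\le\alpha(|x-y|),\quad |\phi(y)-T^m_x\phi(y)|\le\alpha(|x-y|)|x-y|^m,\quad |\phi'(y)-(T^m_x\phi)'(y)|\le\alpha(|x-y|)|x-y|^{m-1}.$$ Then there is a constant $C>0$ depending only on $\gamma$ and $K$ such that for all $a,b\in K$, $$|A(\gamma;b,a)|\le C\big(|A(\gamma;a,b)|+\alpha(|b-a|)|b-a|^m\big).$$
   Context: $C^m(\mathbb{R},\mathbb{R}^3)$: curves whose components are $m$-times continuously differentiable with bounded $m$th derivative. A modulus of continuity is a continuous, increasing, concave $\alpha:[0,\infty)\to[0,\infty)$ with $\alpha(0)=0$. $T^m_x\phi(y)=\sum_{k=0}^m\frac{\phi^{(k)}(x)}{k!}(y-x)^k$, written $T_x\phi$. For $a,b\in\mathbb{R}$ (in either order, with oriented integrals): $A(\gamma;a,b)= h(b)-h(a)-2\int_a^b\big((T_af)'T_ag-(T_ag)'T_af\big) + 2f(a)(g(b)-T_ag(b)) - 2g(a)(f(b)-T_af(b))$. *)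

From Stdlib Require Import Reals Lra.
From Stdlib Require Export Rtopology.
From Coquelicot Require Export Coquelicot.
Open Scope R_scope.

Definition Cm (m : nat) (phi : R -> R) : Prop :=
  (forall k x, (k <= m)%nat -> ex_derive_n phi k x) /\
  (forall k x, (k <= m)%nat -> continuous (Derive_n phi k) x) /\
  (exists M, forall x, Rabs (Derive_n phi m x) <= M).

Definition modulus_of_continuity (alpha : R -> R) : Prop :=
  alpha 0 = 0 /\
  (forall t, 0 <= t -> 0 <= alpha t) /\
  (forall t, 0 <= t -> continuous alpha t) /\
  (forall s t, 0 <= s -> s <= t -> alpha s <= alpha t) /\
  (forall s t l, 0 <= s -> 0 <= t -> 0 <= l <= 1 ->
     l * alpha s + (1 - l) * alpha t <= alpha (l * s + (1 - l) * t)).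

Definition Taylor (m : nat) (phi : R -> R) (x y : R) : R :=
  sum_n (fun k => Derive_n phi k x / INR (Factorial.fact k) * (y - x) ^ k) m.

Definition Aarea (m : nat) (f g h : R -> R) (a b : R) : R :=
  h b - h a
  - 2 * RInt (fun t => Derive (Taylor m f a) t * Taylor m g a t
                       - Derive (Taylor m g a) t * Taylor m f a t) a b
  + 2 * f a * (g b - Taylor m g a b)
  - 2 * g a * (f b - Taylor m f a b).

Definition is_interval (I : R -> Prop) : Prop :=
  forall x y z, I x -> I y -> x <= z <= y -> I z.

Definition taylor_estimates (m : nat) (alpha : R -> R) (I : R -> Prop)
  (phi : R -> R) : Prop :=
  forall x y, I x -> I y ->
    Rabs (Derive_n phi m x - Derive_n phi m y) <= alpha (Rabs (x - y)) /\
    Rabs (phi y - Taylor m phi x y) <= alpha (Rabs (x - y)) * Rabs (x - y) ^ m /\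
    Rabs (Derive phi y - Derive (Taylor m phi x) y)
      <= alpha (Rabs (x - y)) * Rabs (x - y) ^ (m - 1).

From Stdlib Require Import Reals Lra Lia.
From Coquelicot Require Import Coquelicot.
Open Scope R_scope.

(* In A(a,b) + A(b,a) the terms h(b) - h(a) and the exact area integrals
   2 int_a^b (f'g - g'f) cancel.  What is left are two "Taylor defects", each a
   sum of boundary terms f(a)(g(b) - T_a g(b)), ..., bounded by the hypothesis
   by alpha(|b-a|)|b-a|^m, and of the integral over [a,b] of the difference
   between the area forms of (T_a f, T_a g) and of (f, g).  Writing that
   difference as a sum of products of a Taylor error (of order
   alpha(|b-a|)|b-a|^(m-1) for derivatives, alpha(|b-a|)|b-a|^m for values) by
   a derivative or Taylor polynomial (bounded on a segment containing K), it is
   O(alpha(|b-a|)|b-a|^(m-1)), so the integral is O(alpha(|b-a|)|b-a|^m). *)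

Lemma ex_derive_Taylor m phi x t : ex_derive (Taylor m phi x) t.
Proof.
  apply (@ex_derive_sum_n R_AbsRing R_NormedModule
           (fun k t => Derive_n phi k x / INR (Factorial.fact k) * (t - x) ^ k)).
  intros; auto_derive; auto.
Qed.

Lemma continuous_Taylor m phi x t : continuous (Taylor m phi x) t.
Proof. apply (@ex_derive_continuous R_AbsRing R_NormedModule), ex_derive_Taylor. Qed.

Lemma continuous_Derive_Taylor m phi x t : continuous (Derive (Taylor m phi x)) t.
Proof.
  set (c k := Derive_n phi k x / INR (Factorial.fact k)).
  apply continuous_ext with (fun t => sum_n (fun k => c k * (INR k * (t - x) ^ pred k)) m).
  - intros u. symmetry. apply is_derive_unique.
    apply (@is_derive_sum_n R_AbsRing R_NormedModule (fun k t => c k * (t - x) ^ k)).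
    intros k _. auto_derive; auto. now rewrite Rmult_1_l.
  - apply (@ex_derive_continuous R_AbsRing R_NormedModule).
    apply (@ex_derive_sum_n R_AbsRing R_NormedModule
             (fun k t => c k * (INR k * (t - x) ^ pred k))).
    intros; auto_derive; auto.
Qed.

Definition area_form (phi psi : R -> R) (t : R) : R :=
  Derive phi t * psi t - Derive psi t * phi t.

Lemma continuous_area_form phi psi t :
  continuous phi t -> continuous psi t ->
  continuous (Derive phi) t -> continuous (Derive psi) t ->
  continuous (area_form phi psi) t.
Proof.
  intros. apply (@continuous_minus R_UniformSpace R_AbsRing R_NormedModule);
    apply (@continuous_mult R_UniformSpace R_AbsRing); assumption.
Qed.

Lemma ex_RInt_area_form phi psi a b :
  (forall t, continuous phi t) -> (forall t, continuous psi t) ->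
  (forall t, continuous (Derive phi) t) -> (forall t, continuous (Derive psi) t) ->
  ex_RInt (area_form phi psi) a b.
Proof.
  intros. apply (@ex_RInt_continuous R_CompleteNormedModule).
  intros t _. apply continuous_area_form; auto.
Qed.

Lemma ex_RInt_area_form_Taylor m phi psi x a b :
  ex_RInt (area_form (Taylor m phi x) (Taylor m psi x)) a b.
Proof.
  apply ex_RInt_area_form; intros;
    auto using continuous_Taylor, continuous_Derive_Taylor.
Qed.

Lemma ex_RInt_area_form_smooth m phi psi a b :
  (1 <= m)%nat ->
  (forall k x, (k <= m)%nat -> continuous (Derive_n phi k) x) ->
  (forall k x, (k <= m)%nat -> continuous (Derive_n psi k) x) ->
  ex_RInt (area_form phi psi) a b.
Proof.
  intros m_pos phi_smooth psi_smooth. apply ex_RInt_area_form; intro t;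
    [apply (phi_smooth 0%nat) | apply (psi_smooth 0%nat)
    | apply (phi_smooth 1%nat) | apply (psi_smooth 1%nat)]; lia.
Qed.

Definition taylor_defect (m : nat) (f g : R -> R) (a b : R) : R :=
  - 2 * (RInt (area_form (Taylor m f a) (Taylor m g a)) a b - RInt (area_form f g) a b)
  + 2 * f a * (g b - Taylor m g a b) - 2 * g a * (f b - Taylor m f a b).

Lemma Aarea_eq_defect m f g h a b :
  Aarea m f g h a b = h b - h a - 2 * RInt (area_form f g) a b + taylor_defect m f g a b.
Proof. unfold Aarea, taylor_defect, area_form. ring. Qed.

Lemma Aarea_add_swap m f g h a b :
  ex_RInt (area_form f g) a b ->
  Aarea m f g h a b + Aarea m f g h b a = taylor_defect m f g a b + taylor_defect m f g b a.
Proof.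
  intros Hint. rewrite !Aarea_eq_defect, <- (opp_RInt_swap _ _ _ Hint).
  unfold opp; simpl. ring.
Qed.

Lemma compact_in_segment (K : R -> Prop) :
  compact K -> exists lo hi, lo <= hi /\ forall x, K x -> lo <= x <= hi.
Proof.
  intros HK. destruct (compact_P1 K HK) as [lo [hi Hseg]].
  exists lo, (Rmax lo hi). split; [apply Rmax_l |].
  intros x Kx. specialize (Hseg x Kx). pose proof (Rmax_r lo hi). lra.
Qed.

Lemma continuous_bounded_on_segment (phi : R -> R) lo hi :
  (forall x, lo <= x <= hi -> continuous phi x) ->
  exists B, 0 <= B /\ forall x, lo <= x <= hi -> Rabs (phi x) <= B.
Proof.
  intros Hc. destruct (Rle_dec lo hi) as [Hlh | Hlh].
  - destruct (continuity_ab_maj (fun x => Rabs (phi x)) lo hi Hlh) as [X [HX _]].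
    + intros c Hcx. apply continuity_pt_filterlim.
      apply (continuous_comp phi Rabs); [apply Hc; auto | apply continuous_Rabs].
    + exists (Rabs (phi X)). split; [apply Rabs_pos | exact HX].
  - exists 0. split; [lra | intros; lra].
Qed.

Lemma Derive_n_bounded_on_segment (m : nat) (phi : R -> R) lo hi :
  (forall k x, (k <= m)%nat -> continuous (Derive_n phi k) x) ->
  exists B, 0 <= B /\
    forall k x, (k <= m)%nat -> lo <= x <= hi -> Rabs (Derive_n phi k x) <= B.
Proof.
  induction m as [| m IH]; intros Hc.
  - destruct (continuous_bounded_on_segment phi lo hi) as [B [B0 HB]].
    { intros x _. exact (Hc 0%nat x (le_n 0)). }
    exists B. split; [exact B0 |].
    intros k x Hk Hx. replace k with 0%nat by lia. exact (HB x Hx).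
  - destruct IH as [B1 [B10 HB1]]; [intros k x Hk; apply Hc; lia |].
    destruct (continuous_bounded_on_segment (Derive_n phi (S m)) lo hi) as [B2 [B20 HB2]].
    { intros x _. apply Hc; lia. }
    exists (Rmax B1 B2). split; [eapply Rle_trans; [exact B10 | apply Rmax_l] |].
    intros k x Hk Hx. destruct (Nat.eq_dec k (S m)) as [-> | Hne].
    + eapply Rle_trans; [exact (HB2 x Hx) | apply Rmax_r].
    + eapply Rle_trans; [apply HB1; auto; lia | apply Rmax_l].
Qed.

Lemma Rabs_sum_n_le (u : nat -> R) n M :
  (forall k, (k <= n)%nat -> Rabs (u k) <= M) -> Rabs (sum_n u n) <= INR (S n) * M.
Proof.
  induction n as [| n IH]; intros Hu.
  - rewrite sum_O. simpl INR. rewrite Rmult_1_l. apply Hu; lia.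
  - rewrite sum_Sn. change (plus (sum_n u n) (u (S n))) with (sum_n u n + u (S n)).
    specialize (IH ltac:(intros k Hk; apply Hu; lia)). specialize (Hu (S n) (le_n _)).
    rewrite S_INR. pose proof (Rabs_triang (sum_n u n) (u (S n))). lra.
Qed.

Definition Taylor_bound (m : nat) (B D : R) : R := INR (S m) * (B * (1 + D) ^ m).

Lemma Taylor_bound_nonneg m B D : 0 <= B -> 0 <= D -> 0 <= Taylor_bound m B D.
Proof.
  intros. unfold Taylor_bound. apply Rmult_le_pos; [apply pos_INR |].
  apply Rmult_le_pos; [assumption | apply pow_le; lra].
Qed.

Lemma Rabs_Taylor_le m phi x t B D :
  (forall k, (k <= m)%nat -> Rabs (Derive_n phi k x) <= B) -> Rabs (t - x) <= D ->
  Rabs (Taylor m phi x t) <= Taylor_bound m B D.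
Proof.
  intros HB Htx. apply Rabs_sum_n_le. intros k Hk.
  assert (fact_ge_1 : 1 <= INR (Factorial.fact k)).
  { apply (le_INR 1). pose proof (Factorial.lt_O_fact k). lia. }
  unfold Rdiv. rewrite !Rabs_mult, Rabs_inv, <- RPow_abs, (Rabs_right (INR _)) by lra.
  apply Rmult_le_compat.
  - apply Rmult_le_pos; [apply Rabs_pos | left; apply Rinv_0_lt_compat; lra].
  - apply pow_le, Rabs_pos.
  - rewrite <- (Rmult_1_r B). apply Rmult_le_compat;
      [apply Rabs_pos | left; apply Rinv_0_lt_compat; lra | auto |].
    rewrite <- Rinv_1. apply Rinv_le_contravar; lra.
  - apply Rle_trans with ((1 + D) ^ k);
      [apply pow_incr; split; [apply Rabs_pos | lra] | apply Rle_pow; [| exact Hk]].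
    pose proof (Rabs_pos (t - x)). lra.
Qed.

Definition integrand_constant (m : nat) (B D : R) : R := 2 * Taylor_bound m B D + 2 * B * D.

Definition defect_constant (m : nat) (B D : R) : R := 2 * integrand_constant m B D + 4 * B.

Lemma defect_constant_nonneg m B D : 0 <= B -> 0 <= D -> 0 <= defect_constant m B D.
Proof.
  intros B0 D0. pose proof (Taylor_bound_nonneg m B D B0 D0).
  pose proof (Rmult_le_pos B D B0 D0). unfold defect_constant, integrand_constant. lra.
Qed.

Lemma Rabs_le_of_Rabs_add_le x y c W :
  0 <= c -> 0 <= W -> Rabs (x + y) <= 2 * c * W -> Rabs y <= (1 + 2 * c) * (Rabs x + W).
Proof.
  intros c0 W0 Hxy. pose proof (Rmult_le_pos c (Rabs x) c0 (Rabs_pos x)).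
  pose proof (Rabs_triang (x + y) (- x)) as Htri.
  rewrite Rabs_Ropp in Htri. replace (x + y + - x) with y in Htri by ring. lra.
Qed.

Lemma modulus_weight_le alpha n s d :
  modulus_of_continuity alpha -> 0 <= s <= d -> alpha s * s ^ n <= alpha d * d ^ n.
Proof.
  intros [_ [alpha_nonneg [_ [alpha_mono _]]]] Hsd.
  apply Rmult_le_compat; [apply alpha_nonneg; lra | apply pow_le; lra | |].
  - apply alpha_mono; lra.
  - apply pow_incr; lra.
Qed.

Lemma is_interval_between (I : R -> Prop) x y t :
  is_interval I -> I x -> I y -> Rmin x y <= t <= Rmax x y -> I t.
Proof.
  intros HI Ix Iy. unfold Rmin, Rmax. destruct (Rle_dec x y); intros Ht.
  - exact (HI x y t Ix Iy Ht).
  - exact (HI y x t Iy Ix Ht).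
Qed.

Lemma Rabs_between_le x y t : Rmin x y <= t <= Rmax x y -> Rabs (x - t) <= Rabs (y - x).
Proof. unfold Rmin, Rmax. destruct (Rle_dec x y); intros; split_Rabs; lra. Qed.

Lemma abs_RInt_le_dist (h : R -> R) x y M :
  ex_RInt h x y -> (forall t, Rmin x y <= t <= Rmax x y -> Rabs (h t) <= M) ->
  Rabs (RInt h x y) <= Rabs (y - x) * M.
Proof.
  unfold Rmin, Rmax. intros Hint Hb. destruct (Rle_dec x y) as [Hxy | Hxy].
  - rewrite (Rabs_right (y - x)) by lra. exact (abs_RInt_le_const h x y M Hxy Hint Hb).
  - rewrite <- (opp_RInt_swap h y x (ex_RInt_swap _ _ _ Hint)), (Rabs_left (y - x)) by lra.
    unfold opp; simpl. rewrite Rabs_Ropp, Ropp_minus_distr.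
    apply abs_RInt_le_const; [lra | apply ex_RInt_swap, Hint | exact Hb].
Qed.

Lemma Rabs_mult_le a b A B : Rabs a <= A -> Rabs b <= B -> Rabs (a * b) <= A * B.
Proof. intros. rewrite Rabs_mult. apply Rmult_le_compat; auto using Rabs_pos. Qed.

Lemma area_form_perturbation_le P Q P' Q' F G F' G' e e' BT B :
  Rabs (F - P) <= e -> Rabs (G - Q) <= e ->
  Rabs (F' - P') <= e' -> Rabs (G' - Q') <= e' ->
  Rabs P <= BT -> Rabs Q <= BT -> Rabs F' <= B -> Rabs G' <= B ->
  Rabs ((P' * Q - Q' * P) - (F' * G - G' * F)) <= 2 * BT * e' + 2 * B * e.
Proof.
  intros HF HG HF' HG' HP HQ HBF HBG.
  replace ((P' * Q - Q' * P) - (F' * G - G' * F)) with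
    ((G' - Q') * P - (F' - P') * Q + (G' * (F - P) - F' * (G - Q))) by ring.
  pose proof (Rabs_mult_le _ _ _ _ HG' HP). pose proof (Rabs_mult_le _ _ _ _ HF' HQ).
  pose proof (Rabs_mult_le _ _ _ _ HBG HF). pose proof (Rabs_mult_le _ _ _ _ HBF HG).
  pose proof (Rabs_triang ((G' - Q') * P - (F' - P') * Q) (G' * (F - P) - F' * (G - Q))).
  pose proof (Rabs_triang ((G' - Q') * P) (- ((F' - P') * Q))).
  pose proof (Rabs_triang (G' * (F - P)) (- (F' * (G - Q)))).
  rewrite Rabs_Ropp in *. unfold Rminus in *. lra.
Qed.

Section TaylorDefectBound.

Variables (m : nat) (f g alpha : R -> R) (I : R -> Prop) (lo hi B : R).

Hypothesis m_pos : (1 <= m)%nat.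
Hypothesis alpha_modulus : modulus_of_continuity alpha.
Hypothesis I_interval : is_interval I.
Hypothesis f_estimates : taylor_estimates m alpha I f.
Hypothesis g_estimates : taylor_estimates m alpha I g.
Hypothesis f_smooth : forall k x, (k <= m)%nat -> continuous (Derive_n f k) x.
Hypothesis g_smooth : forall k x, (k <= m)%nat -> continuous (Derive_n g k) x.
Hypothesis derivs_bounded : forall k x, (k <= m)%nat -> lo <= x <= hi ->
  Rabs (Derive_n f k x) <= B /\ Rabs (Derive_n g k x) <= B.

Let pow_m_split z : z ^ m = z ^ (m - 1) * z.
Proof. replace m with (S (m - 1)) at 1 by lia. simpl. ring. Qed.

Lemma area_form_Taylor_sub_le x y t :
  I x -> I y -> lo <= x <= hi -> lo <= y <= hi -> Rmin x y <= t <= Rmax x y ->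
  Rabs (area_form (Taylor m f x) (Taylor m g x) t - area_form f g t)
    <= integrand_constant m B (hi - lo) * (alpha (Rabs (y - x)) * Rabs (y - x) ^ (m - 1)).
Proof.
  intros Ix Iy Hx Hy Ht.
  assert (It : I t) by exact (is_interval_between I x y t I_interval Ix Iy Ht).
  assert (Ht_seg : lo <= t <= hi).
  { apply (is_interval_between (fun u => lo <= u <= hi) x y t); auto.
    intros u v w Hu Hv Hw. lra. }
  pose proof (Rabs_between_le x y t Ht) as Hxt.
  set (d := Rabs (y - x)) in *. set (s := Rabs (x - t)) in *.
  set (E := alpha d * d ^ (m - 1)).
  assert (Hd : d <= hi - lo) by (unfold d; split_Rabs; lra).
  assert (E0 : 0 <= E).
  { apply Rmult_le_pos; [apply alpha_modulus, Rabs_pos | apply pow_le, Rabs_pos]. }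
  assert (Hs : 0 <= s <= d) by (split; [apply Rabs_pos | exact Hxt]).
  assert (weight_pred : alpha s * s ^ (m - 1) <= E) by now apply modulus_weight_le.
  assert (weight : alpha s * s ^ m <= E * (hi - lo)).
  { apply Rle_trans with (alpha d * d ^ m); [now apply modulus_weight_le |].
    rewrite pow_m_split, <- Rmult_assoc. apply Rmult_le_compat_l; lra. }
  assert (Taylor_f : Rabs (Taylor m f x t) <= Taylor_bound m B (hi - lo)).
  { apply Rabs_Taylor_le; [intros k Hk; apply derivs_bounded; auto | split_Rabs; lra]. }
  assert (Taylor_g : Rabs (Taylor m g x t) <= Taylor_bound m B (hi - lo)).
  { apply Rabs_Taylor_le; [intros k Hk; apply derivs_bounded; auto | split_Rabs; lra]. }
  destruct (derivs_bounded 1 t m_pos Ht_seg) as [Df Dg].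
  destruct (f_estimates x t Ix It) as [_ [f0 f1]].
  destruct (g_estimates x t Ix It) as [_ [g0 g1]].
  fold s in f0, f1, g0, g1.
  apply Rle_trans with (2 * Taylor_bound m B (hi - lo) * E + 2 * B * (E * (hi - lo))).
  - unfold area_form. apply area_form_perturbation_le; auto; lra.
  - apply Req_le. unfold integrand_constant. ring.
Qed.

Lemma RInt_area_form_Taylor_sub_le x y :
  I x -> I y -> lo <= x <= hi -> lo <= y <= hi ->
  Rabs (RInt (area_form (Taylor m f x) (Taylor m g x)) x y - RInt (area_form f g) x y)
    <= integrand_constant m B (hi - lo) * (alpha (Rabs (y - x)) * Rabs (y - x) ^ m).
Proof.
  intros Ix Iy Hx Hy.
  pose proof (ex_RInt_area_form_smooth m f g x y m_pos f_smooth g_smooth) as Hint.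
  pose proof (ex_RInt_area_form_Taylor m f g x x y) as Hint_T.
  assert (Hsub : RInt (area_form (Taylor m f x) (Taylor m g x)) x y - RInt (area_form f g) x y
                 = RInt (fun t => area_form (Taylor m f x) (Taylor m g x) t - area_form f g t) x y)
    by (symmetry; exact (RInt_minus _ _ _ _ Hint_T Hint)).
  rewrite Hsub, pow_m_split.
  replace (_ * (_ * (Rabs (y - x) ^ (m - 1) * Rabs (y - x))))
    with (Rabs (y - x) * (integrand_constant m B (hi - lo)
                          * (alpha (Rabs (y - x)) * Rabs (y - x) ^ (m - 1)))) by ring.
  apply abs_RInt_le_dist.
  - exact (ex_RInt_minus _ _ _ _ Hint_T Hint).
  - intros t Ht. now apply area_form_Taylor_sub_le.
Qed.

Lemma taylor_defect_le a b :
  I a -> I b -> lo <= a <= hi -> lo <= b <= hi ->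
  Rabs (taylor_defect m f g a b)
    <= defect_constant m B (hi - lo) * (alpha (Rabs (b - a)) * Rabs (b - a) ^ m).
Proof.
  intros Ia Ib Ha Hb.
  pose proof (RInt_area_form_Taylor_sub_le a b Ia Ib Ha Hb) as Hint.
  destruct (f_estimates a b Ia Ib) as [_ [fb _]].
  destruct (g_estimates a b Ia Ib) as [_ [gb _]].
  rewrite (Rabs_minus_sym a b) in fb, gb.
  destruct (derivs_bounded 0 a (Nat.le_0_l m) Ha) as [fa ga].
  pose proof (Rabs_mult_le _ _ _ _ fa gb) as Hfg.
  pose proof (Rabs_mult_le _ _ _ _ ga fb) as Hgf.
  unfold taylor_defect, defect_constant.
  apply Rabs_le_between in Hint, Hfg, Hgf. apply Rabs_le_between.
  simpl Derive_n in Hfg, Hgf. rewrite <- !Rmult_assoc in *. lra.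
Qed.

End TaylorDefectBound.

Theorem lemma3p4 (m : nat) (f g h : R -> R) (K : R -> Prop) :
  (1 <= m)%nat ->
  Cm m f -> Cm m g -> Cm m h ->
  compact K ->
  exists C : R, 0 < C /\
    forall alpha : R -> R,
      modulus_of_continuity alpha ->
      (exists I : R -> Prop, is_interval I /\ (forall x, K x -> I x) /\
         taylor_estimates m alpha I f /\ taylor_estimates m alpha I g) ->
      forall a b, K a -> K b ->
        Rabs (Aarea m f g h b a)
          <= C * (Rabs (Aarea m f g h a b) + alpha (Rabs (b - a)) * Rabs (b - a) ^ m).
Proof.
  intros m_pos [_ [f_smooth _]] [_ [g_smooth _]] _ HK.
  destruct (compact_in_segment K HK) as [lo [hi [lo_le_hi K_seg]]].
  destruct (Derive_n_bounded_on_segment m f lo hi f_smooth) as [Bf [Bf0 HBf]].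
  destruct (Derive_n_bounded_on_segment m g lo hi g_smooth) as [Bg [Bg0 HBg]].
  set (B := Rmax Bf Bg).
  assert (derivs_bounded : forall k x, (k <= m)%nat -> lo <= x <= hi ->
            Rabs (Derive_n f k x) <= B /\ Rabs (Derive_n g k x) <= B).
  { intros k x Hk Hx. split; eapply Rle_trans;
      [apply HBf | apply Rmax_l | apply HBg | apply Rmax_r]; auto. }
  set (c := defect_constant m B (hi - lo)).
  assert (c_nonneg : 0 <= c).
  { apply defect_constant_nonneg; [eapply Rle_trans; [exact Bf0 | apply Rmax_l] | lra]. }
  exists (1 + 2 * c). split; [lra |].
  intros alpha alpha_modulus [I [I_interval [K_I [f_est g_est]]]] a b Ka Kb.
  pose proof (K_seg a Ka) as Ha. pose proof (K_seg b Kb) as Hb.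
  pose proof (taylor_defect_le m f g alpha I lo hi B m_pos alpha_modulus I_interval f_est g_est
                f_smooth g_smooth derivs_bounded) as defect_le.
  pose proof (defect_le a b (K_I a Ka) (K_I b Kb) Ha Hb) as D_ab.
  pose proof (defect_le b a (K_I b Kb) (K_I a Ka) Hb Ha) as D_ba.
  rewrite Rabs_minus_sym in D_ba. fold c in D_ab, D_ba.
  apply Rabs_le_of_Rabs_add_le; [exact c_nonneg | apply Rmult_le_pos;
    [apply alpha_modulus, Rabs_pos | apply pow_le, Rabs_pos] |].
  rewrite (Aarea_add_swap m f g h a b
             (ex_RInt_area_form_smooth m f g a b m_pos f_smooth g_smooth)).
  pose proof (Rabs_triang (taylor_defect m f g a b) (taylor_defect m f g b a)). lra.
Qed.
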